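(* Let $M\in\mathrm{SL}(2,\mathbb{Z})$ and $n\in\mathbb{N}$. Then the reduction of $M$ mod $n$ is conjugate to its inverse within $\mathrm{GL}(2,\mathbb{Z}/n\mathbb{Z})$; hence the action of $M$ (mod $1$) on the lattice $L_n=\{x\in\mathbb{T}^2: nx\equiv0 \bmod 1\}$ of $n$-division points of the torus $\mathbb{T}^2=\mathbb{R}^2/\mathbb{Z}^2$ is reversible for all $n\in\mathbb{N}$. Moreover, if $\mathrm{mgcd}(M)=r\neq0$, then for every $n\in\mathbb{N}$ the reduction of $M$ mod $n$ possesses an involutory reversor, i.e. there is $R\in\mathrm{GL}(2,\mathbb{Z}/n\mathbb{Z})$ with $R^2=\mathbb{1}$ and $RMR^{-1}=M^{-1}$ over $\mathbb{Z}/n\mathbb{Z}$.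
   Context: For $M=\begin{pmatrix}a&b\\c&d\end{pmatrix}$, $\mathrm{mgcd}(M)=\gcd(b,c,d-a)$. An action is called reversible if it is conjugate to its inverse within the relevant group (here via an element of $\mathrm{GL}(2,\mathbb{Z}/n\mathbb{Z})$); a conjugating element is a reversor. *)

From mathcomp Require Import all_boot all_order all_algebra.
Set Implicit Arguments. Unset Strict Implicit. Unset Printing Implicit Defensive.
Import GRing.Theory Num.Theory.
Local Open Scope ring_scope.

Definition mgcd (M : 'M[int]_2) : int :=
  gcdz (gcdz (M ord0 ord_max) (M ord_max ord0)) (M ord_max ord_max - M ord0 ord0).

Definition red_mx (n : nat) (M : 'M[int]_2) : 'M['Z_n]_2 :=
  map_mx (fun z : int => (z%:~R : 'Z_n)) M.

From mathcomp Require Import all_boot all_order all_algebra.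
From mathcomp Require Import ring.
Import GRing.Theory Num.Theory.
Local Open Scope ring_scope.

(* Write M = a + r N with r = mgcd M and N = [[0, b], [c, e]] having coprime entries
   (for mgcd M = 0 take r = 0 and N = [[0, 0], [1, 0]]).  An explicit traceless matrix
   S(x, y) satisfies S^2 = D^2 and (S M)^2 = D^2 det M, where D is the binary quadratic
   form c x^2 + e x y - b y^2, so D^-1 S is an involutory reversor of M as soon as D is
   invertible.  As N is primitive, D takes a value prime to n, a unit of Z/nZ. *)

Definition mx2 {K : Type} (a b c d : K) : 'M[K]_2 :=
  \matrix_(i < 2, j < 2) if (i : nat) == 0%N then (if (j : nat) == 0%N then a else b)
                         else (if (j : nat) == 0%N then c else d).

Lemma ord2P (i : 'I_2) : i = ord0 \/ i = ord_max.
Proof. by case: i => [[|[|k]] lt_i2]; [left | right | by []]; apply: val_inj. Qed.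

Lemma mx2E {K : Type} (A : 'M[K]_2) :
  A = mx2 (A ord0 ord0) (A ord0 ord_max) (A ord_max ord0) (A ord_max ord_max).
Proof. by apply/matrixP=> i j; rewrite mxE; case: (ord2P i) => ->; case: (ord2P j) => ->. Qed.

Lemma map_mx2 {K L : Type} (f : K -> L) (a b c d : K) :
  map_mx f (mx2 a b c d) = mx2 (f a) (f b) (f c) (f d).
Proof. by apply/matrixP=> i j; rewrite !mxE; case: (ord2P i) => ->; case: (ord2P j) => ->. Qed.

Lemma mx2_mul (K : pzSemiRingType) (a b c d a' b' c' d' : K) :
  mx2 a b c d *m mx2 a' b' c' d' =
  mx2 (a * a' + b * c') (a * b' + b * d') (c * a' + d * c') (c * b' + d * d').
Proof.
apply/matrixP=> i j; rewrite !mxE !big_ord_recl big_ord0 !mxE /=.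
by case: (ord2P i) => ->; case: (ord2P j) => ->; rewrite /= addr0.
Qed.

Lemma scalar_mx2 (K : pzSemiRingType) (k : K) : k%:M = mx2 k 0 0 k.
Proof. by apply/matrixP=> i j; rewrite !mxE; case: (ord2P i) => ->; case: (ord2P j) => ->. Qed.

Lemma det_mx2 (K : comPzRingType) (a b c d : K) : \det (mx2 a b c d) = a * d - b * c.
Proof.
rewrite (expand_det_row _ ord0) !big_ord_recl big_ord0 /cofactor !det_mx11 !mxE /=.
by rewrite addr0 expr0 expr1 !mul1r mulN1r mulrN.
Qed.

Lemma involutory_reversor {K : comUnitRingType} {m : nat} {R M : 'M[K]_m} :
  R *m R = 1%:M -> R *m M *m R *m M = 1%:M ->
  [/\ R \in unitmx, invmx R = R & R *m M *m invmx R = invmx M].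
Proof.
move=> RR1 RMRM1; have [uR _] := mulmx1_unit RR1; have [_ uM] := mulmx1_unit RMRM1.
have invR : invmx R = R by rewrite -[invmx R]mulmx1 -RR1 mulKmx.
split=> //; rewrite invR -[invmx M]mul1mx -RMRM1 mulmxK //.
Qed.

(* S := [reversor_mx b c e x y] is traceless and orthogonal to N := [mx2 0 b c e] for
   the trace form, so Cayley-Hamilton gives S^2 = - det S and S N S = - det S (e - N),
   i.e. S M S = - det S M^-1 for M = a + r N of determinant 1; moreover
   - det S = (c x^2 + e x y - b y^2)^2. *)
Definition reversor_mx {K : pzRingType} (b c e x y : K) : 'M[K]_2 :=
  let p := c * x ^+ 2 + b * y ^+ 2 in
  mx2 p (e * x ^+ 2 - 2 * b * x * y) (2 * c * x * y + e * y ^+ 2) (- p).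

Section ReversorMx.
Variables (K : comPzRingType) (a r b c e x y : K).
Let D := c * x ^+ 2 + e * x * y - b * y ^+ 2.
Let S := reversor_mx b c e x y.
Let M := mx2 a (r * b) (r * c) (a + r * e).

Lemma reversor_mx_sqr : S *m S = (D ^+ 2)%:M.
Proof. by rewrite /S /reversor_mx mx2_mul scalar_mx2; congr mx2; rewrite /D; ring. Qed.

Lemma reversor_mx_mulmx_sqr : S *m M *m S *m M = (D ^+ 2 * \det M)%:M.
Proof.
by rewrite /S /M /reversor_mx det_mx2 !mx2_mul scalar_mx2; congr mx2; rewrite /D; ring.
Qed.

End ReversorMx.

Lemma mx2_involutory_reversor (K : comUnitRingType) (a r b c e x y : K) :
  let M := mx2 a (r * b) (r * c) (a + r * e) in
  c * x ^+ 2 + e * x * y - b * y ^+ 2 \is a GRing.unit -> \det M = 1 ->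
  exists2 R : 'M[K]_2, R \in unitmx & R *m R = 1%:M /\ R *m M *m invmx R = invmx M.
Proof.
move=> M uD detM; set D := _ - _ in uD.
pose R := D^-1 *: reversor_mx b c e x y.
have R_sandwich (A : 'M[K]_2) :
    R *m A *m R = D^-1 ^+ 2 *: (reversor_mx b c e x y *m A *m reversor_mx b c e x y).
  by rewrite -!scalemxAl -scalemxAr scalerA expr2.
have RR1 : R *m R = 1%:M.
  have := R_sandwich 1%:M; rewrite !mulmx1 => ->.
  by rewrite reversor_mx_sqr scale_scalar_mx -exprMn mulVr ?expr1n.
have RMRM1 : R *m M *m R *m M = 1%:M.
  rewrite R_sandwich -scalemxAl reversor_mx_mulmx_sqr scale_scalar_mx.
  by rewrite detM mulr1 -exprMn mulVr ?expr1n.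
have [uR _ RM] := involutory_reversor RR1 RMRM1.
by exists R.
Qed.

Lemma Euclid_dvdzM (p : nat) (u v : int) : prime p ->
  (p%:Z %| u * v)%Z = (p%:Z %| u)%Z || (p%:Z %| v)%Z.
Proof. by move=> p_pr; rewrite !dvdzE abszM Euclid_dvdM. Qed.

Lemma coprime_no_common_prime (m n : nat) : (0 < m)%N ->
  (forall p, prime p -> (p %| m)%N -> ~~ (p %| n)%N) -> coprime m n.
Proof.
move=> m_gt0 no_common; rewrite /coprime; case: (ltngtP (gcdn m n) 1) => //.
  by rewrite ltnNge gcdn_gt0 m_gt0.
move=> /pdiv_prime p_pr; have p_gcd := pdiv_dvd (gcdn m n).
have := no_common _ p_pr (dvdn_trans p_gcd (dvdn_gcdl m n)).
by rewrite (dvdn_trans p_gcd (dvdn_gcdr m n)).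
Qed.

Lemma prime_dvd_partn (p n : nat) (pi : nat_pred) : prime p -> (0 < n)%N -> (p %| n)%N ->
  (p %| n`_pi)%N = (p \in pi).
Proof.
move=> p_pr n_gt0 p_n; have := pi_of_part pi n_gt0 p.
by rewrite !inE !mem_primes p_pr n_gt0 p_n part_gt0.
Qed.

(* For each prime p dividing n, the choice of x and y leaves exactly one of the three
   terms of the form prime to p. *)
Lemma primitive_form_coprime_value {n : nat} {al be ga : int} :
  (0 < n)%N -> gcdz (gcdz al be) ga = 1 ->
  exists x y : int, coprime n `|al * x ^+ 2 + be * x * y + ga * y ^+ 2|.
Proof.
move=> n_gt0 primitive.
pose pi1 : nat_pred := [pred q | (q%:Z %| al)%Z && ~~ (q%:Z %| ga)%Z].
pose pi2 : nat_pred := [pred q | ~~ (q%:Z %| al)%Z].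
exists (n`_pi1)%:Z, (n`_pi2)%:Z; apply: coprime_no_common_prime => // p p_pr p_n.
have p_x : (p%:Z %| (n`_pi1)%:Z)%Z = (p%:Z %| al)%Z && ~~ (p%:Z %| ga)%Z.
  by rewrite dvdzE /= prime_dvd_partn.
have p_y : (p%:Z %| (n`_pi2)%:Z)%Z = ~~ (p%:Z %| al)%Z.
  by rewrite dvdzE /= prime_dvd_partn.
have p_not_all : ~~ [&& (p%:Z %| al)%Z, (p%:Z %| be)%Z & (p%:Z %| ga)%Z].
  apply/and3P=> -[p_al p_be p_ga].
  have : (p%:Z %| gcdz (gcdz al be) ga)%Z by rewrite !dvdz_gcd p_al p_be p_ga.
  by rewrite primitive dvdzE dvdn1 /= => /eqP p1; rewrite p1 in p_pr.
have dvd_term (u v w : int) : (p%:Z %| u * v * w)%Z = [|| p%:Z %| u, p%:Z %| v | p%:Z %| w]%Z.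
  by rewrite !Euclid_dvdzM // orbA.
have dvdzDl (u v : int) : (p%:Z %| u)%Z -> (p%:Z %| u + v)%Z = (p%:Z %| v)%Z.
  exact: rpredDl.
have dvdzDr (u v : int) : (p%:Z %| v)%Z -> (p%:Z %| u + v)%Z = (p%:Z %| u)%Z.
  exact: rpredDr.
rewrite -[(p %| _)%N]/(p%:Z %| _)%Z !expr2 !mulrA.
case p_al: (p%:Z %| al)%Z; rewrite p_al /= in p_x p_y p_not_all; last first.
  rewrite dvdzDr; last by rewrite dvd_term p_y !orbT.
  rewrite dvdzDr; last by rewrite dvd_term p_y !orbT.
  by rewrite dvd_term p_al p_x.
case p_ga: (p%:Z %| ga)%Z; rewrite p_ga /= ?andbT in p_x p_not_all.
  rewrite dvdzDr; last by rewrite dvd_term p_ga.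
  rewrite dvdzDl; last by rewrite dvd_term p_al.
  by rewrite dvd_term p_x p_y !orbF.
rewrite -addrA dvdzDl; last by rewrite dvd_term p_al.
rewrite dvdzDl; last by rewrite dvd_term p_x !orbT.
by rewrite dvd_term p_ga p_y.
Qed.

Lemma unitZp_int (n : nat) (z : int) : (1 < n)%N -> coprime n `|z| ->
  (z%:~R : 'Z_n) \is a GRing.unit.
Proof.
move=> n_gt1 cop; rewrite [z]intEsign rmorphM rmorph_sign /= unitrMl ?unitrX ?unitrN1 //.
by rewrite unitZpE.
Qed.

Lemma mgcd_decomposition (M : 'M[int]_2) :
  exists r b c e : int, M = mx2 (M ord0 ord0) (r * b) (r * c) (M ord0 ord0 + r * e)
                        /\ gcdz (gcdz b c) e = 1.
Proof.
set a := M ord0 ord0; case: (eqVneq (mgcd M) 0) => [/eqP|r_neq0].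
  rewrite /mgcd !gcdz_eq0 => /andP[/andP[/eqP b0 /eqP c0] /eqP /subr0_eq d_a].
  by exists 0, 0, 1, 0; rewrite {1}[M]mx2E b0 c0 d_a !mul0r addr0.
set r := mgcd M in r_neq0.
have := dvdzz r; rewrite {2}/r /mgcd !dvdz_gcd => /andP[/andP[r_b r_c] r_e].
exists r, (M ord0 ord_max %/ r)%Z, (M ord_max ord0 %/ r)%Z, ((M ord_max ord_max - a) %/ r)%Z.
rewrite ![r * (_ %/ r)%Z]mulrC !divzK // addrC subrK; split; first exact: mx2E.
have r_abs : r = `|r|%:Z by [].
apply: (mulIf r_neq0); rewrite mul1r [X in _ * X]r_abs mulz_gcdl.
by rewrite [X in gcdz _ _ * X]r_abs mulz_gcdl !divzK.
Qed.

Theorem theorem4p2 (M : 'M[int]_2) (n : nat) :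
  \det M = 1 -> (1 < n)%N ->
  (exists2 R : 'M['Z_n]_2, R \in unitmx &
     R *m red_mx n M *m invmx R = invmx (red_mx n M))
  /\
  (mgcd M != 0 ->
   exists2 R : 'M['Z_n]_2, R \in unitmx &
     R *m R = 1%:M /\ R *m red_mx n M *m invmx R = invmx (red_mx n M)).
Proof.
move=> detM n_gt1.
suff [R uR [RR1 RMR]] : exists2 R : 'M['Z_n]_2, R \in unitmx &
     R *m R = 1%:M /\ R *m red_mx n M *m invmx R = invmx (red_mx n M).
  by split; [exists R | exists R].
have det_red : \det (red_mx n M) = 1 by rewrite det_map_mx detM rmorph1.
have [r [b [c [e [M_eq primitive]]]]] := mgcd_decomposition M.
have primitive_form : gcdz (gcdz c e) (- b) = 1 by rewrite gcdzN gcdzAC (gcdzC c).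
have [x [y cop]] := primitive_form_coprime_value (ltnW n_gt1) primitive_form.
have uD : ((c * x ^+ 2 + e * x * y - b * y ^+ 2)%:~R : 'Z_n) \is a GRing.unit.
  by apply: unitZp_int; rewrite // -mulNr.
rewrite !(rmorphB, rmorphD, rmorphM, rmorphXn) in uD.
rewrite /red_mx M_eq map_mx2 !rmorphD !rmorphM in det_red *.
exact: mx2_involutory_reversor uD det_red.
Qed.
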